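(* Let $p$ be an odd prime, $n\ge2$ an integer, and $\mu_{p^n}$ a primitive $p^n$-th root of unity. Then in $\mathbb{Z}[\mu_{p^n}]$, \[ (1-\mu_{p^n})^{p^n-p^{n-1}}\equiv -p \pmod{(1-\mu_{p^n})^{p^n}}. \] *)

From mathcomp Require Import all_boot all_order all_algebra all_field.
Set Implicit Arguments. Unset Strict Implicit. Unset Printing Implicit Defensive.
Import GRing.Theory Num.Theory.
Local Open Scope ring_scope.

Definition in_Zadj (z x : algC) : Prop :=
  exists q : {poly int}, x = (map_poly intr q).[z].

Definition congr_Zadj (z m a b : algC) : Prop :=
  exists c : algC, in_Zadj z c /\ a - b = c * m.

(* Write pi = 1 - z, q = p^(n-1) and D = z^q - 1, so that 1 + D is a primitive
   p-th root of unity.  Expanding z^q = (1 - pi)^q gives D = -pi^q (mod p pi), and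
   expanding (1 + D)^p = 1 and cancelling D gives p = -D^(p-1) (mod p D).  Feeding
   each congruence into the other raises the known power of pi dividing p one step
   at a time, up to pi^(q(p-1)) | p, whence pi^q | D.  Then p + D^(p-1), a multiple
   of p D, is divisible by pi^(q(p-1)) pi^q = pi^(qp), and
   D^(p-1) = (-pi^q)^(p-1) = pi^(q(p-1)) modulo p pi * pi^(q(p-2)), which is again
   divisible by pi^(qp) since p > 2. *)

From mathcomp Require Import all_boot all_order all_algebra all_field.
From mathcomp Require Import zify ring.
Set Implicit Arguments.
Unset Strict Implicit.
Unset Printing Implicit Defensive.

Import GRing.Theory Num.Theory.
Local Open Scope ring_scope.

Lemma prime_dvd_bin_pow (p m i : nat) :
  prime p -> (0 < i < p ^ m)%N -> (p %| 'C(p ^ m, i))%N.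
Proof.
move=> p_pr /andP[i_gt0 i_lt]; apply: contraT => p_ndvd.
have co_pm : coprime (p ^ m) 'C(p ^ m, i).
  by apply: coprimeXl; rewrite prime_coprime.
have := mul_bin_diag (p ^ m) i.-1; rewrite prednK // => bin_eq.
have : (p ^ m %| i * 'C(p ^ m, i))%N by rewrite -bin_eq dvdn_mulr.
by rewrite Gauss_dvdl // => /(dvdn_leq i_gt0); rewrite leqNgt i_lt.
Qed.

Lemma exprD1n_inner (R : pzSemiRingType) (x : R) (m : nat) :
  (x + 1) ^+ m.+1 = x ^+ m.+1 + 1 + x * \sum_(i < m) x ^+ i *+ 'C(m.+1, i.+1).
Proof.
rewrite exprD1n big_ord_recl big_ord_recr /= expr0 bin0 binn !mulr1n mulr_sumr.
rewrite addrCA [in RHS]addrC; congr (_ + _); last exact: addrC.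
by apply: eq_bigr => i _; rewrite exprS mulrnAr.
Qed.

Section AdjoinedRing.
Variable z : algC.

Lemma Zadj_nat (k : nat) : in_Zadj z k%:R.
Proof. by exists k%:R%:P; rewrite map_polyC hornerC /= natz. Qed.

Lemma Zadj0 : in_Zadj z 0. Proof. exact: Zadj_nat 0. Qed.
Lemma Zadj1 : in_Zadj z 1. Proof. exact: Zadj_nat 1. Qed.

Lemma Zadj_gen : in_Zadj z z.
Proof. by exists 'X; rewrite map_polyX hornerX. Qed.

Lemma Zadj_add x y : in_Zadj z x -> in_Zadj z y -> in_Zadj z (x + y).
Proof. by move=> [a ->] [b ->]; exists (a + b); rewrite rmorphD hornerD. Qed.

Lemma Zadj_opp x : in_Zadj z x -> in_Zadj z (- x).
Proof. by move=> [a ->]; exists (- a); rewrite rmorphN hornerN. Qed.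

Lemma Zadj_sub x y : in_Zadj z x -> in_Zadj z y -> in_Zadj z (x - y).
Proof. by move=> Zx Zy; apply/Zadj_add/Zadj_opp. Qed.

Lemma Zadj_mul x y : in_Zadj z x -> in_Zadj z y -> in_Zadj z (x * y).
Proof. by move=> [a ->] [b ->]; exists (a * b); rewrite rmorphM hornerM. Qed.

Lemma Zadj_exp x k : in_Zadj z x -> in_Zadj z (x ^+ k).
Proof.
by move=> Zx; elim: k => [|k IHk]; rewrite ?expr0 ?exprS; [apply: Zadj1 | apply: Zadj_mul].
Qed.

Lemma Zadj_natmul x k : in_Zadj z x -> in_Zadj z (x *+ k).
Proof. by move=> Zx; rewrite -mulr_natl; apply/Zadj_mul/Zx/Zadj_nat. Qed.

Lemma Zadj_sum (I : Type) (r : seq I) (P : pred I) (F : I -> algC) :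
  (forall i, P i -> in_Zadj z (F i)) -> in_Zadj z (\sum_(i <- r | P i) F i).
Proof. by move=> ZF; apply: big_ind => //; [apply: Zadj0 | apply: Zadj_add]. Qed.

(* [congr_Zadj z m a b] is convertible to [Zadj_dvd z m (a - b)]. *)
Definition Zadj_dvd (d x : algC) : Prop := exists c, in_Zadj z c /\ x = c * d.

Lemma Zadj_dvd0 d : Zadj_dvd d 0.
Proof. by exists 0; rewrite mul0r; split; first exact: Zadj0. Qed.

Lemma Zadj_dvdd d : Zadj_dvd d d.
Proof. by exists 1; rewrite mul1r; split; first exact: Zadj1. Qed.

Lemma Zadj_dvdD d x y : Zadj_dvd d x -> Zadj_dvd d y -> Zadj_dvd d (x + y).
Proof.
by move=> [a [Za ->]] [b [Zb ->]]; exists (a + b); rewrite mulrDl; split; first exact: Zadj_add.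
Qed.

Lemma Zadj_dvdN d x : Zadj_dvd d x -> Zadj_dvd d (- x).
Proof. by move=> [a [Za ->]]; exists (- a); rewrite mulNr; split; first exact: Zadj_opp. Qed.

Lemma Zadj_dvdB d x y : Zadj_dvd d x -> Zadj_dvd d y -> Zadj_dvd d (x - y).
Proof. by move=> dx dy; apply/Zadj_dvdD/Zadj_dvdN. Qed.

Lemma Zadj_dvd_mull d x y : in_Zadj z y -> Zadj_dvd d x -> Zadj_dvd d (y * x).
Proof.
by move=> Zy [a [Za ->]]; exists (y * a); rewrite mulrA; split; first exact: Zadj_mul.
Qed.

Lemma Zadj_dvd_mul d1 d2 x1 x2 :
  Zadj_dvd d1 x1 -> Zadj_dvd d2 x2 -> Zadj_dvd (d1 * d2) (x1 * x2).
Proof.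
move=> [a [Za ->]] [b [Zb ->]]; exists (a * b); split; first exact: Zadj_mul.
by rewrite mulrACA.
Qed.

Lemma Zadj_dvd_trans d1 d2 x : Zadj_dvd d1 d2 -> Zadj_dvd d2 x -> Zadj_dvd d1 x.
Proof.
by move=> [a [Za ->]] [b [Zb ->]]; exists (b * a); rewrite mulrA; split; first exact: Zadj_mul.
Qed.

Lemma Zadj_dvd_exp2r d x k : Zadj_dvd d x -> Zadj_dvd (d ^+ k) (x ^+ k).
Proof.
move=> dx; elim: k => [|k IHk]; last by rewrite !exprS; apply: Zadj_dvd_mul.
by exists 1; rewrite !expr0 mulr1; split; first exact: Zadj1.
Qed.

Lemma Zadj_dvd_exp2l w k l : in_Zadj z w -> (k <= l)%N -> Zadj_dvd (w ^+ k) (w ^+ l).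
Proof.
move=> Zw kl; exists (w ^+ (l - k)); rewrite -exprD subnK //.
by split; first exact: Zadj_exp.
Qed.

Lemma Zadj_dvd_sum d (I : Type) (r : seq I) (P : pred I) (F : I -> algC) :
  (forall i, P i -> Zadj_dvd d (F i)) -> Zadj_dvd d (\sum_(i <- r | P i) F i).
Proof. by move=> dF; apply: big_ind => //; [apply: Zadj_dvd0 | apply: Zadj_dvdD]. Qed.

Lemma Zadj_dvd_subXX (d w x y : algC) (k n : nat) :
  Zadj_dvd (w ^+ k) x -> Zadj_dvd (w ^+ k) y -> Zadj_dvd d (x - y) ->
  Zadj_dvd (d * w ^+ (k * n)) (x ^+ n.+1 - y ^+ n.+1).
Proof.
move=> wx wy dxy; rewrite subrXX; apply: Zadj_dvd_mul => //.
apply: Zadj_dvd_sum => i _ /=.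
have -> : (k * n = k * (n - i) + k * i)%N by rewrite -mulnDr subnK // -ltnS.
by rewrite exprD !exprM; apply: Zadj_dvd_mul; apply: Zadj_dvd_exp2r.
Qed.

Lemma Zadj_dvd_mul2r d x c : c != 0 -> Zadj_dvd (d * c) (x * c) -> Zadj_dvd d x.
Proof. by move=> c_neq0 [a [Za]]; rewrite mulrA => /(mulIf c_neq0) ->; exists a. Qed.

Lemma Zadj_dvd_sum_natmul x (p k : nat) (c : nat -> nat) :
  in_Zadj z x -> (forall i, (i < k)%N -> (p %| c i)%N) ->
  Zadj_dvd p%:R (\sum_(i < k) x ^+ i *+ c i).
Proof.
move=> Zx p_dvd_c; apply: Zadj_dvd_sum => i _.
rewrite -(divnK (p_dvd_c i (ltn_ord i))) mulrnA -(mulr_natr (_ *+ _)).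
by apply: (Zadj_dvd_mull _ (Zadj_dvdd _)); apply/Zadj_natmul/Zadj_exp.
Qed.

Lemma Zadj_binom_dvd x (p m : nat) :
  in_Zadj z x -> (0 < m)%N -> (forall i, (0 < i < m)%N -> (p %| 'C(m, i))%N) ->
  Zadj_dvd (p%:R * x) ((x + 1) ^+ m - x ^+ m - 1).
Proof.
case: m => // m Zx _ p_dvd_bin; rewrite exprD1n_inner; set S := \sum_(i < m) _.
have -> : x ^+ m.+1 + 1 + x * S - x ^+ m.+1 - 1 = S * x by ring.
apply: Zadj_dvd_mul; last exact: Zadj_dvdd.
apply: (Zadj_dvd_sum_natmul (c := fun i => 'C(m.+1, i.+1))) => // i i_lt.
by apply: p_dvd_bin; rewrite ltnS.
Qed.

Lemma Zadj_binom_prime_dvd x (p : nat) : prime p -> in_Zadj z x ->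
  Zadj_dvd (p%:R * x ^+ 2) ((x + 1) ^+ p - x ^+ p - 1 - p%:R * x).
Proof.
move=> p_pr Zx; have [p' def_p] : exists p', p = p'.+2.
  by case: p p_pr => [|[|p']] //; exists p'.
rewrite def_p exprD1n_inner big_ord_recl /= expr0 bin1.
set S := \sum_(i < p') x ^+ i *+ 'C(p'.+2, i.+2).
have -> : \sum_(i < p') x ^+ bump 0 i *+ 'C(p'.+2, (bump 0 i).+1) = x * S.
  by rewrite mulr_sumr; apply: eq_bigr => i _; rewrite exprS mulrnAr.
have -> : x ^+ p'.+2 + 1 + x * (1 *+ p'.+2 + x * S) - x ^+ p'.+2 - 1 - p'.+2%:R * x
    = S * x ^+ 2 by ring.
apply: Zadj_dvd_mul; last exact: Zadj_dvdd.
apply: (Zadj_dvd_sum_natmul (c := fun i => 'C(p'.+2, i.+2))) => // i i_lt.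
by rewrite -def_p prime_dvd_bin // def_p.
Qed.

Lemma Zadj_dvd_ppow_binom w (p m : nat) : prime p -> odd p -> in_Zadj z w ->
  Zadj_dvd (p%:R * (1 - w)) (w ^+ (p ^ m) - 1 + (1 - w) ^+ (p ^ m)).
Proof.
move=> p_pr p_odd Zw; set pi := 1 - w.
have Zpi : in_Zadj z pi by apply/Zadj_sub/Zw/Zadj1.
have ppow_gt0 : (0 < p ^ m)%N by rewrite expn_gt0 prime_gt0.
have := Zadj_binom_dvd (Zadj_opp Zpi) ppow_gt0 (@prime_dvd_bin_pow p m ^~ p_pr).
have -> : - pi + 1 = w by rewrite opprB subrK.
rewrite exprNn -signr_odd oddX p_odd orbT mulN1r opprK addrAC mulrN => pi_dvd.
exact: Zadj_dvd_trans (Zadj_dvdN (Zadj_dvdd _)) pi_dvd.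
Qed.

Lemma Zadj_dvd_unity_root zeta (p : nat) : prime p -> in_Zadj z zeta ->
  zeta ^+ p = 1 -> zeta != 1 ->
  Zadj_dvd (p%:R * (zeta - 1)) (p%:R + (zeta - 1) ^+ (p - 1)).
Proof.
move=> p_pr Zzeta zeta_p zeta_neq1; set D := zeta - 1.
have D_neq0 : D != 0 by rewrite subr_eq0.
apply: (Zadj_dvd_mul2r D_neq0).
have := Zadj_binom_prime_dvd p_pr (Zadj_sub Zzeta Zadj1).
rewrite -/D subrK zeta_p expr2 mulrA => /Zadj_dvdN.
suff -> : (p%:R + D ^+ (p - 1)) * D = - (1 - D ^+ p - 1 - p%:R * D) by [].
by rewrite mulrDl -exprSr subn1 prednK ?prime_gt0 //; ring.
Qed.

End AdjoinedRing.

(* In the application pi = 1 - z and D = z ^+ q - 1. *)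
Section Bootstrap.
Variables (z pi D : algC) (p q : nat).
Hypotheses (Zpi : in_Zadj z pi) (q_gt0 : (0 < q)%N) (p_gt2 : (2 < p)%N).
Hypothesis D_pi : Zadj_dvd z (p%:R * pi) (D + pi ^+ q).
Hypothesis p_D : Zadj_dvd z (p%:R * D) (p%:R + D ^+ (p - 1)).

Lemma pi_exp_dvd_D_of_p k :
  Zadj_dvd z (pi ^+ k) p%:R -> Zadj_dvd z (pi ^+ minn q k.+1) D.
Proof.
move=> pi_p; rewrite -(addrK (pi ^+ q) D); apply: Zadj_dvdB.
  apply: (Zadj_dvd_trans _ D_pi).
  apply: (Zadj_dvd_trans _ (Zadj_dvd_mul pi_p (Zadj_dvdd z pi))).
  by rewrite -exprSr; apply: Zadj_dvd_exp2l; rewrite ?geq_minr.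
by apply: Zadj_dvd_exp2l; rewrite ?geq_minl.
Qed.

Lemma pi_exp_dvd_p k : (k <= q * (p - 1))%N -> Zadj_dvd z (pi ^+ k) p%:R.
Proof.
elim: k => [_ | k IHk k_lt].
  by exists p%:R; rewrite expr0 mulr1; split; first exact: Zadj_nat.
have pi_p := IHk (ltnW k_lt); have pi_D := pi_exp_dvd_D_of_p pi_p.
rewrite -(addrK (D ^+ (p - 1)) p%:R); apply: Zadj_dvdB.
  apply: (Zadj_dvd_trans _ p_D); apply: (Zadj_dvd_trans _ (Zadj_dvd_mul pi_p pi_D)).
  by rewrite -exprD; apply: Zadj_dvd_exp2l => //; lia.
apply: (Zadj_dvd_trans _ (Zadj_dvd_exp2r (p - 1) pi_D)).
by rewrite -exprM; apply: Zadj_dvd_exp2l => //; nia.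
Qed.

Lemma pi_exp_dvd_D : Zadj_dvd z (pi ^+ q) D.
Proof.
have := pi_exp_dvd_D_of_p (pi_exp_dvd_p (leqnn (q * (p - 1)))).
by rewrite (minn_idPl _) //; nia.
Qed.

Hypothesis p_odd : odd p.

Lemma pi_exp_dvd_add_p : Zadj_dvd z (pi ^+ (q * p)) (pi ^+ (q * (p - 1)) + p%:R).
Proof.
have pi_p := pi_exp_dvd_p (leqnn (q * (p - 1))).
have pi_even : pi ^+ (q * (p - 1)) = (- pi ^+ q) ^+ (p - 1).
  by rewrite exprNn exprM -signr_odd oddB ?p_odd ?(ltnW (ltnW p_gt2)) // mul1r.
have -> : pi ^+ (q * (p - 1)) + p%:R
    = (p%:R + D ^+ (p - 1)) - (D ^+ (p - 1) - pi ^+ (q * (p - 1))).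
  by rewrite opprB addrA addrAC addrK addrC.
apply: Zadj_dvdB; last first.
  rewrite pi_even.
  have -> : (p - 1 = (p - 2).+1)%N by lia.
  have D_pi' : Zadj_dvd z (p%:R * pi) (D - - pi ^+ q) by rewrite opprK.
  have pi_negpi : Zadj_dvd z (pi ^+ q) (- pi ^+ q) by apply/Zadj_dvdN/Zadj_dvdd.
  apply: (Zadj_dvd_trans _ (Zadj_dvd_subXX (p - 2) pi_exp_dvd_D pi_negpi D_pi')).
  have pi_pi := Zadj_dvd_mul pi_p (Zadj_dvdd z pi).
  apply: (Zadj_dvd_trans _ (Zadj_dvd_mul pi_pi (Zadj_dvdd z _))).
  by rewrite -exprSr -exprD; apply: Zadj_dvd_exp2l => //; nia.
apply: (Zadj_dvd_trans _ p_D); apply: (Zadj_dvd_trans _ (Zadj_dvd_mul pi_p pi_exp_dvd_D)).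
by rewrite -exprD; apply: Zadj_dvd_exp2l => //; nia.
Qed.

End Bootstrap.

Theorem lemma5p10 (p n : nat) (z : algC) :
  prime p -> odd p -> (2 <= n)%N -> (p ^ n)%N.-primitive_root z ->
  congr_Zadj z ((1 - z) ^+ (p ^ n)%N)
    ((1 - z) ^+ (p ^ n - p ^ n.-1)%N) (- (p%:R)).
Proof.
move=> p_pr p_odd n_ge2 z_prim.
have p_gt2 : (2 < p)%N by case: p p_pr p_odd {z_prim} => [|[|[|p']]].
set q := (p ^ n.-1)%N.
have q_gt0 : (0 < q)%N by rewrite expn_gt0 prime_gt0.
have pn : (p ^ n = q * p)%N by rewrite -expnSr prednK // (leq_trans _ n_ge2).
have Zpi : in_Zadj z (1 - z) by apply/Zadj_sub/Zadj_gen/Zadj1.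
have zq_neq1 : z ^+ q != 1.
  rewrite -(prim_order_dvd z_prim) pn; apply: contraTN isT => /(dvdn_leq q_gt0).
  by rewrite leqNgt ltn_Pmulr ?prime_gt1.
have D_pi := Zadj_dvd_ppow_binom n.-1 p_pr p_odd (Zadj_gen z).
have p_D : Zadj_dvd z (p%:R * (z ^+ q - 1)) (p%:R + (z ^+ q - 1) ^+ (p - 1)).
  apply: Zadj_dvd_unity_root (Zadj_exp _ (Zadj_gen z)) _ zq_neq1 => //.
  by rewrite -exprM -pn prim_expr_order.
have := pi_exp_dvd_add_p Zpi q_gt0 p_gt2 D_pi p_D p_odd.
have e_eq : (q * p - q = q * (p - 1))%N by rewrite mulnBr muln1.
by rewrite /congr_Zadj pn e_eq opprK.
Qed.
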